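(* There are infinitely many $n$ for which there exists a connected graph of order $n$ that is 3-degenerate, bipartite and planar and has at least $15^{(n-1)/7}$ inclusion-minimal connected dominating sets; hence the maximum number of minimal connected dominating sets in 3-degenerate bipartite planar graphs of order $n$ is $\Omega(1.4723^n)$.
   Context: A graph is $d$-degenerate if there is an ordering $(v_1,\dots,v_n)$ of its vertices such that each $v_i$ has degree at most $d$ in $G[\{v_i,\dots,v_n\}]$. A connected dominating set of a graph $G=(V,E)$ is a set $S\subseteq V$ such that every vertex outside $S$ has a neighbor in $S$ and $G[S]$ is connected; it is (inclusion-)minimal if no proper subset is one. (The witnessing graphs are: $k\ge2$ disjoint copies of the graph on $\{x_1,x_2,x_3,y_1,y_2,y_3,z\}$ with edges $x_iy_j$ for $i\neq j$ and $zy_j$ for all $j$, plus a vertex $s$ adjacent to all $x$-vertices of all copies; order $n=7k+1$.) *)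

From HB Require Import structures.
From mathcomp Require Import all_boot all_order all_algebra all_fingroup.
From mathcomp Require Import all_classical all_reals all_analysis.
From mathcomp Require Import Rstruct Rstruct_topology.
Set Implicit Arguments. Unset Strict Implicit. Unset Printing Implicit Defensive.
Import Order.TTheory GRing.Theory Num.Theory.
Import numFieldNormedType.Exports.

Definition simple_graph (n : nat) (e : rel 'I_n) : Prop :=
  symmetric e /\ irreflexive e.

Definition connected_graph (n : nat) (e : rel 'I_n) : Prop :=
  forall u v : 'I_n, connect e u v.

Definition bipartite (n : nat) (e : rel 'I_n) : Prop :=
  exists c : 'I_n -> bool, forall u v, e u v -> c u != c v.

Definition degenerate (d n : nat) (e : rel 'I_n) : Prop :=
  exists p : {perm 'I_n},
    forall i : 'I_n, #|[set j : 'I_n | (i <= j)%N && e (p i) (p j)]| <= d.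

Definition induced (n : nat) (e : rel 'I_n) (S : {set 'I_n}) : rel 'I_n :=
  fun u v => [&& u \in S, v \in S & e u v].

Definition is_cds (n : nat) (e : rel 'I_n) (S : {set 'I_n}) : Prop :=
  (forall v, v \notin S -> exists2 u, u \in S & e v u) /\
  (forall u v, u \in S -> v \in S -> connect (induced e S) u v).

Definition minimal_cds (n : nat) (e : rel 'I_n) (S : {set 'I_n}) : Prop :=
  is_cds e S /\ forall T : {set 'I_n}, T \proper S -> ~ is_cds e T.

Definition num_minimal_cds (n : nat) (e : rel 'I_n) : nat :=
  #|[set S : {set 'I_n} | `[< minimal_cds e S >] ]|.

Local Open Scope ring_scope.
Local Open Scope classical_set_scope.

(* Planarity: G has a drawing in the plane R^2 (= R * R), i.e. distinct points
   for the vertices and, for each edge uv, an arc (a continuous injective image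
   of [0,1]) from pos u to pos v, such that no arc passes through a vertex other
   than at its endpoints, and arcs of distinct edges meet only at their
   endpoints. *)
Definition unit_int (R : realType) : set R := [set t | 0 <= t <= 1].

Arguments unit_int R : clear implicits.

Definition planar_in (R : realType) (n : nat) (e : rel 'I_n) : Prop :=
  exists (pos : 'I_n -> (R * R)%type) (arc : 'I_n -> 'I_n -> R -> (R * R)%type),
    injective pos /\
    (forall u v, e u v ->
       [/\ {within unit_int R, continuous (arc u v)},
           {in unit_int R &, injective (arc u v)},
           arc u v 0 = pos u & arc u v 1 = pos v]) /\
    (forall u v w t, e u v -> 0 < t < 1 -> arc u v t <> pos w) /\
    (forall u v u' v' t t', e u v -> e u' v' ->
       ~ ((u = u' /\ v = v') \/ (u = v' /\ v = u')) ->
       unit_int R t -> unit_int R t' -> arc u v t = arc u' v' t' ->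
       (t = 0 \/ t = 1) /\ (t' = 0 \/ t' = 1)).

Definition planar (n : nat) (e : rel 'I_n) : Prop :=
  planar_in Rdefinitions.R e.

From Pilot Require Import Defs.
From HB Require Import structures.
From mathcomp Require Import all_boot all_order all_algebra all_fingroup.
From mathcomp Require Import all_classical all_reals all_analysis.
From mathcomp Require Import Rstruct Rstruct_topology.
From mathcomp Require Import ring lra zify.
Import Order.TTheory GRing.Theory Num.Theory.

Set Implicit Arguments. Unset Strict Implicit. Unset Printing Implicit Defensive.

(* Glue k >= 2 copies of the gadget at s.  A connected dominating set must contain
   s, since no path avoiding s joins two copies; so on every copy it traces a set of
   labels that reaches s inside the copy and dominates the rest of the copy.  Each of
   the 15 traces listed below is such a set, and no proper subset of it still reaches
   s while dominating the labels outside it; so choosing one trace per copy yields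
   15^k distinct minimal connected dominating sets on n = 7k + 1 vertices.  These finitely many facts about a single
   gadget are checked by computation.  Drawing the copies in disjoint wedges around
   s shows planarity, and the vertex order ending with s witnesses 3-degeneracy. *)

(* Gadget labels: 0, 1, 2 stand for x_1, x_2, x_3, then 3, 4, 5 for y_1, y_2, y_3,
   6 for z, and 7 for the vertex s shared by all copies. *)
Definition gadget_arc (a b : nat) : bool :=
  [|| [&& a < 3, 3 <= b, b < 6 & b != a + 3], [&& a == 6, 3 <= b & b < 6]
    | (a == 7) && (b < 3)].

Definition gadget_edge (a b : nat) : bool := gadget_arc a b || gadget_arc b a.

Lemma gadget_arc_lt a b : gadget_arc a b -> a < 8 /\ b < 8.
Proof. rewrite /gadget_arc; lia. Qed.

Lemma gadget_edge_sym : symmetric gadget_edge.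
Proof. by move=> a b; rewrite /gadget_edge orbC. Qed.

Lemma gadget_edge_irr d : ~~ gadget_edge d d.
Proof. rewrite /gadget_edge /gadget_arc; lia. Qed.

Lemma gadget_edge_ltl a b : gadget_edge a b -> a < 8.
Proof. rewrite /gadget_edge /gadget_arc; lia. Qed.

Lemma gadget_edge_ltr a b : gadget_edge a b -> b < 8.
Proof. by rewrite gadget_edge_sym => /gadget_edge_ltl. Qed.

Definition gadget_side (d : nat) : bool := (d == 7) || (3 <= d < 6).

Lemma gadget_side_edge a b : gadget_edge a b -> gadget_side a != gadget_side b.
Proof. rewrite /gadget_edge /gadget_arc /gadget_side; lia. Qed.

Notation labels := (iota 0 8).

Lemma all_iotaP n (p : pred nat) : reflect (forall d, d < n -> p d) (all p (iota 0 n)).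
Proof.
apply: (iffP allP) => H d; last by rewrite mem_iota add0n => /andP [_ /H].
by move=> dn; apply: H; rewrite mem_iota.
Qed.

(* A set of labels is given by a bitseq l of size 8, read as [nth false l]; the
   facts below quantifying over such sets enumerate all 256 of them. *)
Fixpoint bitseqs (n : nat) : seq (seq bool) :=
  if n is n'.+1 then [seq b :: l | b <- [:: false; true], l <- bitseqs n'] else [:: [::]].

Lemma all_bitseqsP n (p : pred (seq bool)) :
  all p (bitseqs n) -> forall l, size l = n -> p l.
Proof.
move=> /allP H l ln; apply: H; rewrite -ln {ln}; elim: l => [|b l IH] //=.
rewrite !mem_cat; case: b; last by rewrite (map_f (cons false) IH).
by rewrite (map_f (cons true) IH) orbT.
Qed.

Definition reach_step (P : pred nat) (R : seq nat) : seq nat :=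
  R ++ [seq y <- labels | (y \notin R) && P y && has (fun x => P x && gadget_edge x y) R].

(* Breadth-first search inside P; eight rounds exhaust the eight labels. *)
Definition reach (P : pred nat) (a : nat) : seq nat := iter 8 (reach_step P) [:: a].

Lemma reach_self P a : a \in reach P a.
Proof. by rewrite /reach; elim: 8 => [|i IH] /=; rewrite ?inE // mem_cat IH. Qed.

Lemma reach_connect (T : finType) (r : rel T) (h : nat -> T) (P : pred nat) a :
  (forall x y, P x -> P y -> gadget_edge x y -> r (h x) (h y)) ->
  forall y, y \in reach P a -> connect r (h a) (h y).
Proof.
move=> hr y; rewrite /reach; elim: 8 y => [|i IH] y /=.
  by rewrite inE => /eqP ->.
rewrite mem_cat => /orP [/IH //|].
rewrite mem_filter => /andP [/andP [/andP [_ Py] /hasP [x xR /andP [Px xy]]] _].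
by apply: connect_trans (IH x xR) (connect1 (hr x y Px Py xy)).
Qed.

Definition hub_connected (P : pred nat) : bool :=
  P 7 && all (fun a => P a ==> (7 \in reach P a)) labels.

Definition dominates_outside (P Q : pred nat) : bool :=
  all (fun d => Q d || has (fun j => P j && gadget_edge d j) labels) labels.

Definition sub_labels (P Q : pred nat) : bool := all (fun d => P d ==> Q d) labels.

Definition edge_closed (P : pred nat) (R : seq nat) : bool :=
  all (fun x => all (fun y =>
    [&& x \in R, P x, P y & gadget_edge x y] ==> (y \in R)) labels) labels.

(* Soundness of the search is [reach_connect]; its completeness is checked here. *)
Lemma reach_edge_closed (l : seq bool) a : size l = 8 -> a < 8 ->
  edge_closed (nth false l) (reach (nth false l) a).
Proof.
move=> l8 a8; move: a a8; apply/all_iotaP; move: l l8; apply: all_bitseqsP.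
by vm_compute.
Qed.

Lemma reach_closed (l : seq bool) a x y : size l = 8 -> a < 8 -> gadget_edge x y ->
  x \in reach (nth false l) a -> nth false l x -> nth false l y ->
  y \in reach (nth false l) a.
Proof.
move=> l8 a8 xy Rx Px Py.
have /all_iotaP/(_ x (gadget_edge_ltl xy))/all_iotaP/(_ y (gadget_edge_ltr xy)) :=
  reach_edge_closed l8 a8.
by rewrite Rx Px Py xy.
Qed.

(* The traces, on one copy and without s, of the minimal connected dominating sets. *)
Definition pattern_table : seq (seq nat) :=
  [:: [:: 6;4;0]; [:: 6;5;0]; [:: 6;3;1]; [:: 6;5;1]; [:: 6;3;2]; [:: 6;4;2];
      [:: 0;1;3]; [:: 0;1;4]; [:: 0;1;5]; [:: 0;2;3]; [:: 0;2;4]; [:: 0;2;5];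
      [:: 1;2;3]; [:: 1;2;4]; [:: 1;2;5]].

Definition pattern (m : nat) : pred nat := fun d => (d == 7) || (d \in nth [::] pattern_table m).

Lemma pattern_hub m : pattern m 7.
Proof. by rewrite /pattern eqxx. Qed.

Lemma pattern_local_cds m : m < 15 ->
  dominates_outside (pattern m) (pattern m) && hub_connected (pattern m).
Proof. by move: m; apply/all_iotaP; vm_compute. Qed.

Lemma pattern_locally_minimal (l : seq bool) m : size l = 8 -> m < 15 ->
  hub_connected (nth false l) -> sub_labels (nth false l) (pattern m) ->
  dominates_outside (nth false l) (pattern m) -> sub_labels (pattern m) (nth false l).
Proof.
move=> l8 m15 hc sub; apply/implyP; move: sub; apply/implyP; move: hc; apply/implyP.
move: m m15; apply/all_iotaP; move: l l8; apply: all_bitseqsP.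
by vm_compute.
Qed.

Lemma pattern_injective m m' : m < 15 -> m' < 15 ->
  (forall d, d < 8 -> pattern m d = pattern m' d) -> m = m'.
Proof.
move=> m15 m'15 eq_mm'; apply/eqP.
have: all (fun d => pattern m d == pattern m' d) labels by apply/all_iotaP => d /eq_mm' ->.
apply/implyP; move: m' m'15 {eq_mm'}; apply/all_iotaP; move: m m15; apply/all_iotaP.
by vm_compute.
Qed.

Lemma gadget_connected a : a < 8 -> 7 \in reach predT a.
Proof. by move: a; apply/all_iotaP; vm_compute. Qed.

Lemma gadget_degree a : a < 7 -> count (gadget_edge a) labels <= 3.
Proof. by move: a; apply/all_iotaP; vm_compute. Qed.

Lemma connect_via (T : finType) (e : rel T) z u v : symmetric e ->
  connect e u z -> connect e v z -> connect e u v.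
Proof. by move=> /sym_connect_sym e_sym uz vz; rewrite (connect_trans uz) // e_sym. Qed.

Section Glued.

Variable k : nat.

Local Notation n := (7 * k).+1.

(* Vertex 7 c + d is the vertex with label d < 7 of copy c; vertex 7 k is s. *)
Definition label (v : 'I_n) : nat := if (v : nat) == 7 * k then 7 else v %% 7.
Definition copy (v : 'I_n) : nat := v %/ 7.

Definition glued : rel 'I_n := fun u v =>
  ((label u == 7) || (label v == 7) || (copy u == copy v)) && gadget_edge (label u) (label v).

Definition shared : 'I_n := ord_max.
Definition vertex (c d : nat) : 'I_n := inord (if d == 7 then 7 * k else 7 * c + d).

Lemma vertex_shared c : vertex c 7 = shared.
Proof. by apply: val_inj; rewrite /= inordK. Qed.

Lemma label_shared : label shared = 7.
Proof. by rewrite /label eqxx. Qed.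

Lemma label_lt (v : 'I_n) : label v < 8.
Proof. by rewrite /label; case: ifP => // _; lia. Qed.

Lemma label_vertex c d : c < k -> d < 8 -> label (vertex c d) = d.
Proof.
move=> ck d8; rewrite /label /vertex inordK; last by case: ifP => _; lia.
case: (d =P 7) => [->|/eqP d7]; first by rewrite eqxx.
by case: ifP => /eqP; lia.
Qed.

Lemma copy_vertex c d : c < k -> d < 7 -> copy (vertex c d) = c.
Proof.
move=> ck d7; rewrite /copy /vertex inordK; last by case: ifP => _; lia.
by case: ifP => /eqP; lia.
Qed.

Variant vertex_spec (v : 'I_n) : Prop :=
  | VertexShared of v = shared
  | VertexCopy c a of c < k & a < 7 & v = vertex c a.

Lemma vertexP v : vertex_spec v.
Proof.
have vn := ltn_ord v; case: ((v : nat) =P 7 * k) => [vk|/eqP vk].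
  by apply: VertexShared; apply: val_inj.
apply: (@VertexCopy _ (v %/ 7) (v %% 7)); try lia.
by apply: val_inj; rewrite /= inordK; case: ifP => /eqP; lia.
Qed.

Lemma label_eq7 v : (label v == 7) = (v == shared).
Proof.
case: (vertexP v) => [->|c a ck a7 ->]; first by rewrite label_shared !eqxx.
rewrite label_vertex ?(ltn_trans a7) //; have /negbTE-> : a != 7 by lia.
by apply/esym/eqP => /(congr1 val); rewrite /= inordK; case: ifP => /eqP; lia.
Qed.

Lemma glued_vertex c a b : c < k -> a < 8 -> b < 8 ->
  glued (vertex c a) (vertex c b) = gadget_edge a b.
Proof.
move=> ck a8 b8; rewrite /glued !label_vertex //.
case: (a =P 7) => [->|/eqP a7]; first by rewrite ?eqxx.
case: (b =P 7) => [->|/eqP b7]; first by rewrite ?eqxx ?orbT.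
by rewrite !copy_vertex ?eqxx ?orbT //; lia.
Qed.

Lemma glued_vertex_nbr c a v : c < k -> a < 7 -> glued (vertex c a) v ->
  exists2 b, v = vertex c b & gadget_edge a b.
Proof.
move=> ck a7; have a8 : a < 8 by lia.
case: (vertexP v) => [->|c' b c'k b7 ->].
  by rewrite -(vertex_shared c) glued_vertex // => ab; exists 7.
rewrite /glued !label_vertex ?copy_vertex //; try lia.
by case/andP => cc ab; exists b => //; congr vertex; lia.
Qed.

Lemma glued_sym : symmetric glued.
Proof.
by move=> u v; rewrite /glued gadget_edge_sym (orbC (label u == 7)) [copy u == _]eq_sym.
Qed.

Lemma glued_irr : irreflexive glued.
Proof. by move=> v; rewrite /glued (negbTE (gadget_edge_irr _)) andbF. Qed.

Lemma glued_connect_shared v : connect glued v shared.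
Proof.
case: (vertexP v) => [->|c a ck a7 ->]; first exact: connect0.
rewrite -(vertex_shared c); apply: (@reach_connect _ glued (vertex c) predT).
  by move=> x y _ _ xy; rewrite glued_vertex // ?(gadget_edge_ltl xy) ?(gadget_edge_ltr xy).
by apply: gadget_connected; lia.
Qed.

Lemma glued_connected : connected_graph glued.
Proof.
by move=> u v; apply: connect_via glued_sym (glued_connect_shared u) (glued_connect_shared v).
Qed.

Lemma glued_bipartite : bipartite glued.
Proof. by exists (fun v => gadget_side (label v)) => u v /andP [_ /gadget_side_edge]. Qed.

Lemma glued_degenerate : degenerate 3 glued.
Proof.
exists 1%g => i; case: (vertexP i) => [->|c a ck a7 ->].
  rewrite (_ : [set j | _] = finset.set0) ?cards0 //; apply/setP => j; rewrite !inE !perm1.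
  have [-> |jn] := eqVneq j shared; first by rewrite glued_irr andbF.
  suff -> : (shared <= j) = false by [].
  have : (j : nat) != 7 * k by apply: contra_neq jn => jk; apply: val_inj.
  by have := ltn_ord j; rewrite /=; lia.
apply: (@leq_trans #|[seq vertex c b | b <- labels & gadget_edge a b]|).
  apply/subset_leq_card/fintype.subsetP => j; rewrite inE !perm1.
  case/andP => _ /(glued_vertex_nbr ck a7) [b -> ab].
  by apply: map_f; rewrite mem_filter ab mem_iota (gadget_edge_ltr ab).
by rewrite (leq_trans (card_size _)) // size_map size_filter; apply: gadget_degree.
Qed.


Lemma copy_shared : copy shared = k.
Proof. by rewrite /copy /= mulKn. Qed.

Lemma induced_sym (T : {set 'I_n}) : symmetric (Defs.induced glued T).
Proof. by move=> u v; rewrite /Defs.induced glued_sym andbCA. Qed.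

(* Induced paths of T starting in copy c only cross labels in Q; as s is not in Q,
   they never leave the copy. *)
Lemma induced_connect_copy (T : {set 'I_n}) c (Q : pred nat) a v :
  c < k -> a < 7 -> Q a -> ~~ Q 7 ->
  (forall x y, Q x -> vertex c x \in T -> vertex c y \in T -> gadget_edge x y -> Q y) ->
  connect (Defs.induced glued T) (vertex c a) v -> copy v = c.
Proof.
move=> ck a7 Qa nQ7 Q_closed.
pose A := [pred x : 'I_n | (copy x == c) && Q (label x)].
have T_sym := sym_connect_sym (induced_sym T).
have A_closed : fingraph.closed (Defs.induced glued T) A.
  apply: intro_closed => // x y /and3P [xT yT] + /andP [/eqP cx Qx].
  case: (vertexP x) cx Qx xT => [->|c' a' c'k a'7 ->].
    by rewrite label_shared (negbTE nQ7).
  rewrite copy_vertex // label_vertex ?(ltn_trans a'7) // => c'c Qa' a'T.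
  move=> /(glued_vertex_nbr c'k a'7) [b yb a'b]; subst c'; rewrite yb in yT *.
  have Qb : Q b by apply: Q_closed a'b.
  have b7 : b < 7.
    by have := gadget_edge_ltr a'b; case: (b =P 7) Qb => [->|]; [rewrite (negbTE nQ7)|lia].
  by rewrite /A inE copy_vertex // label_vertex ?(ltn_trans b7) // eqxx.
move=> /(closed_connect A_closed); rewrite /A !inE copy_vertex // label_vertex ?(ltn_trans a7) //.
by rewrite eqxx Qa => /esym /andP [/eqP].
Qed.

Lemma shared_in_cds (T : {set 'I_n}) : 1 < k -> is_cds glued T -> shared \in T.
Proof.
move=> k2 [dom conn]; apply/negPn/negP => sT.
have [u uT] := dom shared sT; rewrite glued_sym.
case: (vertexP u) uT => [-> uT|c a ck a7 -> uT _]; first by rewrite uT in sT.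
pose c' := if c == 0 then 1 else 0.
have c'k : c' < k by rewrite /c'; case: ifP; lia.
have c'c : c' != c by rewrite /c'; case: ifP => /eqP; lia.
have label_lt7 c0 b : vertex c0 b \in T -> b < 8 -> b < 7.
  by case: (b =P 7) => [->|/eqP]; [rewrite vertex_shared (negbTE sT) | lia].
have [b b7 bT] : exists2 b, b < 7 & vertex c' b \in T.
  case/boolP: (vertex c' 0 \in T) => [|/dom [w wT]]; first by exists 0.
  case/(glued_vertex_nbr c'k (isT : 0 < 7)) => b wb ab; rewrite wb in wT.
  by exists b => //; apply: label_lt7 wT (gadget_edge_ltr ab).
move/eqP: c'c; apply; rewrite -(copy_vertex c'k b7).
apply: (@induced_connect_copy T c [pred d | d < 7] a) (conn _ _ uT bT) => // x y _ _ yT xy.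
exact: label_lt7 _ _ yT (gadget_edge_ltr xy).
Qed.

Definition pattern_of (f : {ffun 'I_k -> 'I_15}) (c : nat) : nat :=
  oapp (fun i : 'I_k => val (f i)) 0 (insub c).

Lemma pattern_of_lt f c : pattern_of f c < 15.
Proof. by rewrite /pattern_of; case: (insub c : option 'I_k) => //= i; apply: ltn_ord. Qed.

Lemma pattern_of_ord f (i : 'I_k) : pattern_of f i = f i.
Proof. by rewrite /pattern_of valK. Qed.

Definition pattern_set (f : {ffun 'I_k -> 'I_15}) : {set 'I_n} :=
  [set v | pattern (pattern_of f (copy v)) (label v)].

Lemma mem_pattern_set f c d : c < k -> d < 8 ->
  (vertex c d \in pattern_set f) = pattern (pattern_of f c) d.
Proof.
move=> ck d8; rewrite inE label_vertex //.
case: (d =P 7) => [->|/eqP d7]; first by rewrite !pattern_hub.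
by rewrite copy_vertex //; lia.
Qed.

Lemma pattern_set_cds f : is_cds glued (pattern_set f).
Proof.
split=> [v|].
  case: (vertexP v) => [->|c a ck a7 ->]; first by rewrite inE label_shared pattern_hub.
  have /andP [/all_iotaP dom _] := pattern_local_cds (pattern_of_lt f c).
  have a8 : a < 8 by lia.
  rewrite mem_pattern_set // => /negbTE na; have := dom a a8.
  rewrite na => /hasP [j _ /andP [Pj aj]]; have j8 := gadget_edge_ltr aj.
  by exists (vertex c j); rewrite ?mem_pattern_set ?glued_vertex.
suff to_shared u : u \in pattern_set f -> connect (Defs.induced glued (pattern_set f)) u shared.
  by move=> u v /to_shared uz /to_shared vz; apply: connect_via (induced_sym _) uz vz.
case: (vertexP u) => [-> _|c a ck a7 ->]; first exact: connect0.
have /andP [_ /andP [_ /all_iotaP to_hub]] := pattern_local_cds (pattern_of_lt f c).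
have a8 : a < 8 by lia.
rewrite mem_pattern_set // -(vertex_shared c) => Pa.
apply: (@reach_connect _ _ (vertex c) (pattern (pattern_of f c))); last first.
  exact: implyP (to_hub a a8) Pa.
move=> x y Px Py xy; have x8 := gadget_edge_ltl xy; have y8 := gadget_edge_ltr xy.
by rewrite /Defs.induced !mem_pattern_set ?glued_vertex ?Px ?Py.
Qed.

Definition trace (T : {set 'I_n}) (c : nat) : seq bool := [seq vertex c d \in T | d <- labels].

Lemma size_trace T c : size (trace T c) = 8.
Proof. by rewrite size_map size_iota. Qed.

Lemma nth_trace T c d : d < 8 -> nth false (trace T c) d = (vertex c d \in T).
Proof. by move=> d8; rewrite (nth_map 0) ?size_iota // nth_iota. Qed.

Lemma trace_hub_connected (T : {set 'I_n}) c : c < k -> is_cds glued T -> shared \in T ->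
  hub_connected (nth false (trace T c)).
Proof.
move=> ck [_ conn] sT; rewrite /hub_connected nth_trace // vertex_shared sT andTb.
apply/all_iotaP => a a8; apply/implyP; rewrite nth_trace // => aT.
have [->|a7] := eqVneq a 7; first exact: reach_self.
apply/negPn/negP => n7; suff : copy shared = c by rewrite copy_shared; lia.
apply: (@induced_connect_copy T c (mem (reach (nth false (trace T c)) a)) a) (conn _ _ aT sT) => //.
- by lia.
- exact: reach_self.
- move=> x y Rx xT yT xy; have x8 := gadget_edge_ltl xy; have y8 := gadget_edge_ltr xy.
  by apply: reach_closed (size_trace T c) a8 xy Rx _ _; rewrite nth_trace.
Qed.

Lemma trace_dominates_outside (T : {set 'I_n}) (Q : pred nat) c : c < k -> Q 7 ->
  is_cds glued T -> (forall d, d < 8 -> vertex c d \in T -> Q d) ->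
  dominates_outside (nth false (trace T c)) Q.
Proof.
move=> ck Q7 [dom _] TQ; apply/all_iotaP => d d8.
case/boolP: (Q d) => [//|nQ]; apply/orP; right.
have d7 : d < 7 by case: (d =P 7) nQ => [->|]; [rewrite Q7 | lia].
have dT : vertex c d \notin T by apply: contra nQ; apply: TQ.
have [u uT /(glued_vertex_nbr ck d7) [b ub db]] := dom _ dT.
apply/hasP; exists b; first by rewrite mem_iota (gadget_edge_ltr db).
by rewrite nth_trace ?(gadget_edge_ltr db) // -ub uT db.
Qed.

Lemma pattern_set_minimal f : 1 < k -> minimal_cds glued (pattern_set f).
Proof.
move=> k2; split=> [|T]; first exact: pattern_set_cds.
rewrite properE => /andP [TS /negP not_ST] Tcds; apply: not_ST.
apply/fintype.subsetP => v; case: (vertexP v) => [-> _|c a ck a7 ->].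
  exact: shared_in_cds.
have a8 : a < 8 by lia.
have TP d : d < 8 -> vertex c d \in T -> pattern (pattern_of f c) d.
  by move=> d8 /(fintype.subsetP TS); rewrite mem_pattern_set.
have sub : sub_labels (nth false (trace T c)) (pattern (pattern_of f c)).
  by apply/all_iotaP => d d8; rewrite nth_trace //; apply/implyP/TP.
have := pattern_locally_minimal (size_trace T c) (pattern_of_lt f c)
  (trace_hub_connected ck Tcds (shared_in_cds k2 Tcds)) sub
  (trace_dominates_outside ck (pattern_hub _) Tcds TP).
by rewrite mem_pattern_set // => /all_iotaP/(_ a a8)/implyP; rewrite nth_trace.
Qed.

Lemma pattern_set_inj : injective pattern_set.
Proof.
move=> f g fg; apply/ffunP => i; apply: ord_inj.
rewrite -!pattern_of_ord; apply: pattern_injective; rewrite ?pattern_of_lt // => d d8.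
by rewrite -!mem_pattern_set ?fg.
Qed.

Lemma glued_num_minimal_cds : 1 < k -> 15 ^ k <= num_minimal_cds glued.
Proof.
move=> k2; rewrite -{1}(card_ord k) -{1}(card_ord 15) -card_ffun -cardsT.
rewrite -(card_imset _ pattern_set_inj); apply/subset_leq_card/fintype.subsetP.
by move=> _ /imsetP [f _ ->]; rewrite inE; apply/asboolP/pattern_set_minimal.
Qed.

End Glued.

Local Open Scope ring_scope.
Local Notation R := Rdefinitions.R.

(* A straight-line drawing of the gadget in the quadrant x, y >= 0, with s at the origin. *)
Definition gx (d : nat) : R :=
  match d with 0 => 4 | 1 => 0 | 2 => 1 | 3 => 1 | 4 => 3 | 5 => 4 | 6 => 3 | _ => 0 end.
Definition gy (d : nat) : R :=
  match d with 0 => 0 | 1 => 4 | 2 => 1 | 3 => 3 | 4 => 1 | 5 => 4 | 6 => 3 | _ => 0 end.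

Definition segx a b (t : R) : R := (1 - t) * gx a + t * gx b.
Definition segy a b (t : R) : R := (1 - t) * gy a + t * gy b.

Ltac case_label := case=> [|[|[|[|[|[|[|[|?]]]]]]]] //.

Lemma gadget_pos_inj a b : (a < 8)%N -> (b < 8)%N -> gx a = gx b -> gy a = gy b -> a = b.
Proof. by move: a b; case_label; case_label => _ _ /= ? ?; exfalso; lra. Qed.

Lemma gadget_pos_ge0 a : 0 <= gx a /\ 0 <= gy a.
Proof. by do 7 (case: a => [|a]; first by split => /=; lra); split => /=; lra. Qed.

Lemma gadget_pos_neq0 a : (a < 7)%N -> 0 < gx a + gy a.
Proof. by move: a; case_label => _ /=; lra. Qed.

Definition endpoint (t : R) : Prop := t = 0 \/ t = 1.

Lemma gadget_arcs_meet a b a' b' (t t' : R) :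
  gadget_arc a b -> gadget_arc a' b' -> ~~ ((a == a') && (b == b')) ->
  0 <= t <= 1 -> 0 <= t' <= 1 -> segx a b t = segx a' b' t' -> segy a b t = segy a' b' t' ->
  endpoint t /\ endpoint t'.
Proof.
move=> ab a'b'; have [a8 b8] := gadget_arc_lt ab; have [a'8 b'8] := gadget_arc_lt a'b'.
move: a8 b8 a'8 b'8 ab a'b'; move: a b a' b'; case_label; case_label; case_label; case_label;
  rewrite /segx /segy /endpoint /= => _ _ _ _ _ _ _ /andP [? ?] /andP [? ?] ? ?;
  split; first [left; lra | right; lra].
Qed.

Lemma segx_flip a b t : segx b a t = segx a b (1 - t).
Proof. by rewrite /segx; ring. Qed.

Lemma segy_flip a b t : segy b a t = segy a b (1 - t).
Proof. by rewrite /segy; ring. Qed.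

Lemma endpoint_flip (t : R) : endpoint (1 - t) -> endpoint t.
Proof. by case=> h; [right|left]; lra. Qed.

Lemma unit_flip (t : R) : 0 <= t <= 1 -> 0 <= 1 - t <= 1.
Proof. by move=> /andP [? ?]; apply/andP; split; lra. Qed.

Lemma gadget_segs_meet a b a' b' (t t' : R) :
  gadget_edge a b -> gadget_edge a' b' ->
  ~~ ((a == a') && (b == b')) -> ~~ ((a == b') && (b == a')) ->
  0 <= t <= 1 -> 0 <= t' <= 1 -> segx a b t = segx a' b' t' -> segy a b t = segy a' b' t' ->
  endpoint t /\ endpoint t'.
Proof.
move=> /orP [ab|ba] /orP [a'b'|b'a'] nd nd' ht ht'.
- exact: gadget_arcs_meet.
- rewrite (segx_flip b') (segy_flip b') => ex ey.
  by have [? /endpoint_flip ?] := gadget_arcs_meet ab b'a' nd' ht (unit_flip ht') ex ey.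
- rewrite (segx_flip b) (segy_flip b) andbC in nd' * => ex ey.
  by have [/endpoint_flip ? ?] := gadget_arcs_meet ba a'b' nd' (unit_flip ht) ht' ex ey.
- rewrite (segx_flip b) (segy_flip b) (segx_flip b') (segy_flip b') andbC in nd * => ex ey.
  have [/endpoint_flip ? /endpoint_flip ?] :=
    gadget_arcs_meet ba b'a' nd (unit_flip ht) (unit_flip ht') ex ey.
  by [].
Qed.

Lemma gadget_seg_avoids a b d (t : R) : gadget_edge a b -> (d < 8)%N ->
  0 < t < 1 -> segx a b t = gx d -> segy a b t = gy d -> False.
Proof.
move=> ab; have := gadget_edge_ltl ab; have := gadget_edge_ltr ab; move: ab.
by move: a b d; case_label; case_label; case_label;
  rewrite /segx /segy /= => _ _ _ _ /andP [? ?] ? ?; lra.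
Qed.

Lemma gadget_seg_inj a b (t1 t2 : R) : gadget_edge a b ->
  segx a b t1 = segx a b t2 -> segy a b t1 = segy a b t2 -> t1 = t2.
Proof.
move=> ab; have := gadget_edge_ltl ab; have := gadget_edge_ltr ab; move: ab.
by move: a b; case_label; case_label; rewrite /segx /segy /= => _ _ _ ? ?; lra.
Qed.

Lemma gadget_seg_quadrant a b (t : R) : gadget_edge a b -> 0 <= t <= 1 ->
  [/\ 0 <= segx a b t, 0 <= segy a b t & (segx a b t + segy a b t = 0 -> endpoint t)].
Proof.
move=> ab; have := gadget_edge_ltl ab; have := gadget_edge_ltr ab; move: ab.
move: a b; case_label; case_label; rewrite /segx /segy /endpoint /= => _ _ _ /andP [? ?];
  (split; [lra | lra | move=> ?; first [left; lra | right; lra]]).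
Qed.

(* [wedge c] maps the quadrant x, y >= 0 minus the origin into the cone
   (c + 1/3) w <= u <= (c + 2/3) w, w > 0, of the (u, w)-plane; distinct
   naturals c give disjoint cones, and all of them share the origin. *)
Definition wedge (c x y : R) : R * R := (x + 2 * y + c * (3 * x + 3 * y), 3 * x + 3 * y).

Lemma wedge_inj c x y x' y' : wedge c x y = wedge c x' y' -> x = x' /\ y = y'.
Proof. by case=> E1 E2; rewrite E2 in E1; split; lra. Qed.

Lemma wedge0 c c' : wedge c 0 0 = wedge c' 0 0.
Proof. by rewrite /wedge; congr pair; ring. Qed.

Lemma wedge_lt (c c' x y x' y' : R) : c + 1 <= c' ->
  0 <= x -> 0 <= y -> 0 <= x' -> 0 <= y' -> 0 < x' + y' -> wedge c x y <> wedge c' x' y'.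
Proof.
move=> cc' hx hy hx' hy' hs' [E1 E2].
have : (c + 1) * (3 * x' + 3 * y') <= c' * (3 * x' + 3 * y') by apply: ler_wpM2r => //; lra.
by move: E1; rewrite E2; nra.
Qed.

Lemma wedge_disjoint (c c' : nat) x y x' y' : c != c' ->
  0 <= x -> 0 <= y -> 0 < x + y -> 0 <= x' -> 0 <= y' -> 0 < x' + y' ->
  wedge c%:R x y <> wedge c'%:R x' y'.
Proof.
move=> + hx hy hs hx' hy' hs'; case: ltngtP => // [lt|gt] _.
  by apply: wedge_lt => //; rewrite natr1 ler_nat.
by move/esym; apply: wedge_lt => //; rewrite natr1 ler_nat.
Qed.

Lemma affine_continuous (A B : R) : continuous (fun t : R => A + t * B).
Proof.
move=> x; apply: (@cvgD R R^o R (nbhs x) _ (cst A) (fun t : R => t * B)).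
  exact: cvg_cst.
exact: (@cvgMr_tmp R R (nbhs x) _ id) (cvg_id).
Qed.

Lemma wedge_seg_continuous c a b : continuous (fun t => wedge c (segx a b t) (segy a b t)).
Proof.
pose A := wedge c (gx a) (gy a); pose B := wedge c (gx b) (gy b).
have E1 : (fun t => (wedge c (segx a b t) (segy a b t)).1) = (fun t => A.1 + t * (B.1 - A.1)).
  by apply: funext => t; rewrite /A /B /wedge /segx /segy /=; ring.
have E2 : (fun t => (wedge c (segx a b t) (segy a b t)).2) = (fun t => A.2 + t * (B.2 - A.2)).
  by apply: funext => t; rewrite /A /B /wedge /segx /segy /=; ring.
have h1 := @affine_continuous A.1 (B.1 - A.1); have h2 := @affine_continuous A.2 (B.2 - A.2).
rewrite -E1 in h1; rewrite -E2 in h2.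
by move=> t; apply: (@cvg_pair R R R (nbhs t) _ _ _ _ _ _ _ (h1 t) (h2 t)).
Qed.

Section GluedDrawing.

Local Open Scope classical_set_scope.

Variable k : nat.

Local Notation n := (7 * k).+1.

Definition glued_pos (v : 'I_n) : R * R := wedge (copy v)%:R (gx (label v)) (gy (label v)).

(* An edge is drawn in the wedge of its endpoint other than s. *)
Definition edge_copy (u v : 'I_n) : nat := if label u == 7%N then copy v else copy u.

Definition glued_arc (u v : 'I_n) (t : R) : R * R :=
  wedge (edge_copy u v)%:R (segx (label u) (label v) t) (segy (label u) (label v) t).

Lemma edge_copyP (u v : 'I_n) : (label u == 7%N) || (label v == 7%N) || (copy u == copy v) ->
  (label u = 7%N \/ copy u = edge_copy u v) /\ (label v = 7%N \/ copy v = edge_copy u v).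
Proof.
rewrite /edge_copy; case: eqP => [lu _|_ /= /orP [/eqP lv|/eqP cuv]].
- by split; [left|right].
- by split; [right|left].
- by split; right.
Qed.

Lemma glued_pos_copy (v : 'I_n) c : label v = 7%N \/ copy v = c ->
  glued_pos v = wedge c%:R (gx (label v)) (gy (label v)).
Proof. by rewrite /glued_pos; case=> [->|->] //; apply: wedge0. Qed.

Lemma same_vertex (u v : 'I_n) c : label u = label v ->
  label u = 7%N \/ copy u = c -> label v = 7%N \/ copy v = c -> u = v.
Proof.
case: (vertexP u) => [->|c1 a c1k a7 ->].
  by rewrite label_shared => /esym/eqP; rewrite label_eq7 => /eqP ->.
have a8 : (a < 8)%N by lia.
case: (vertexP v) => [->|c2 b c2k b7 ->].
  by rewrite label_shared label_vertex // => ?; exfalso; lia.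
have b8 : (b < 8)%N by lia.
rewrite !label_vertex ?copy_vertex // => <-.
by case=> [?|<-]; [exfalso; lia|case=> [?|<-] //; exfalso; lia].
Qed.

Lemma glued_pos_inj : injective glued_pos.
Proof.
move=> u w E.
case/boolP: ((label u == 7%N) || (label w == 7%N) || (copy u == copy w)) => [near|].
  have [eu ew] := edge_copyP near.
  move: E; rewrite (glued_pos_copy eu) (glued_pos_copy ew) => /wedge_inj [ex ey].
  exact: same_vertex (gadget_pos_inj (label_lt u) (label_lt w) ex ey) eu ew.
move=> /norP [/norP [lu lw] cuw]; exfalso.
have [hxu hyu] := gadget_pos_ge0 (label u); have [hxw hyw] := gadget_pos_ge0 (label w).
have lu7 : (label u < 7)%N by have := label_lt u; lia.
have lw7 : (label w < 7)%N by have := label_lt w; lia.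
exact: wedge_disjoint cuw hxu hyu (gadget_pos_neq0 lu7) hxw hyw (gadget_pos_neq0 lw7) E.
Qed.

Lemma glued_arc_curve (u v : 'I_n) : glued u v ->
  [/\ {within unit_int R, continuous (glued_arc u v)},
      {in unit_int R &, injective (glued_arc u v)},
      glued_arc u v 0 = glued_pos u & glued_arc u v 1 = glued_pos v].
Proof.
move=> /andP [near uv]; have [eu ev] := edge_copyP near; split.
- exact/continuous_subspaceT/wedge_seg_continuous.
- by move=> t1 t2 _ _ /wedge_inj [ex ey]; apply: gadget_seg_inj uv ex ey.
- by rewrite (glued_pos_copy eu) /glued_arc /segx /segy; congr wedge; ring.
- by rewrite (glued_pos_copy ev) /glued_arc /segx /segy; congr wedge; ring.
Qed.

Lemma glued_arc_avoids (u v w : 'I_n) t : glued u v -> 0 < t < 1 ->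
  glued_arc u v t <> glued_pos w.
Proof.
move=> /andP [_ uv] /andP [t0 t1] E.
have ht : 0 <= t <= 1 by apply/andP; split; lra.
have [sx sy s0] := gadget_seg_quadrant uv ht.
case/boolP: ((label w == 7%N) || (copy w == edge_copy u v)) => [/orP ew|].
  move: E; rewrite (glued_pos_copy (c := edge_copy u v)); last by case: ew => /eqP; [left|right].
  by move=> /wedge_inj [ex ey]; apply: gadget_seg_avoids uv (label_lt w) _ ex ey; apply/andP.
rewrite negb_or => /andP [lw cw].
have lw7 : (label w < 7)%N by have := label_lt w; lia.
have [hx hy] := gadget_pos_ge0 (label w).
have s_pos : 0 < segx (label u) (label v) t + segy (label u) (label v) t.
  by rewrite lt_def addr_ge0 // andbT; apply/eqP => /s0 [] ?; lra.
by apply: wedge_disjoint sx sy s_pos hx hy (gadget_pos_neq0 lw7) E; rewrite eq_sym.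
Qed.

Lemma glued_arcs_meet (u v u' v' : 'I_n) t t' : glued u v -> glued u' v' ->
  ~ ((u = u' /\ v = v') \/ (u = v' /\ v = u')) ->
  unit_int R t -> unit_int R t' -> glued_arc u v t = glued_arc u' v' t' ->
  endpoint t /\ endpoint t'.
Proof.
move=> /andP [near uv] /andP [near' uv'] nd ht ht' E.
have [sx sy s0] := gadget_seg_quadrant uv ht.
have [sx' sy' s0'] := gadget_seg_quadrant uv' ht'.
have [ec|ec] := eqVneq (edge_copy u v) (edge_copy u' v').
  move: E; rewrite /glued_arc ec => /wedge_inj [ex ey].
  have [eu ev] := edge_copyP near; have [eu' ev'] := edge_copyP near'; rewrite ec in eu ev.
  apply: gadget_segs_meet uv uv' _ _ ht ht' ex ey;
    apply/negP => /andP [/eqP l1 /eqP l2]; apply: nd.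
    by left; split; [apply: same_vertex l1 eu eu' | apply: same_vertex l2 ev ev'].
  by right; split; [apply: same_vertex l1 eu ev' | apply: same_vertex l2 ev eu'].
have E2 := congr1 snd E; rewrite /glued_arc /wedge /= in E2.
have [z|nz] := eqVneq (segx (label u) (label v) t + segy (label u) (label v) t) 0.
  by split; [apply: s0 | apply: s0'; lra].
have s_pos : 0 < segx (label u) (label v) t + segy (label u) (label v) t.
  by rewrite lt_def nz addr_ge0.
have s_pos' : 0 < segx (label u') (label v') t' + segy (label u') (label v') t'.
  by rewrite lt_def addr_ge0 ?andbT //; apply/eqP => z'; move/eqP: nz; apply; lra.
by exfalso; apply: wedge_disjoint ec sx sy s_pos sx' sy' s_pos' E.
Qed.

Lemma glued_planar : planar (@glued k).
Proof.
exists glued_pos, glued_arc; split; first exact: glued_pos_inj.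
split; first exact: glued_arc_curve.
split; first by move=> u v w t uv /(glued_arc_avoids (w := w) uv).
by move=> u v u' v' t t' uv u'v' nd ht ht'; apply: glued_arcs_meet.
Qed.

End GluedDrawing.

Lemma glued_properties k :
  [/\ simple_graph (@glued k), connected_graph (@glued k), degenerate 3 (@glued k),
      bipartite (@glued k) & planar (@glued k)].
Proof.
split; [split | | | |].
- exact: glued_sym.
- exact: glued_irr.
- exact: glued_connected.
- exact: glued_degenerate.
- exact: glued_bipartite.
- exact: glued_planar.
Qed.

Lemma powR_glued_order k : (15 : R) `^ (((7 * k).+1%:R - 1) / 7) = (15 ^ k)%:R.
Proof.
have -> : (((7 * k).+1)%:R - 1) / 7 = k%:R :> R by rewrite -addn1 natrD natrM; field.
by rewrite powR_mulrn // natrX.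
Qed.

Lemma growth_rate_le k :
  10000 / 14723 * (14723 / 10000 : R) `^ ((7 * k).+1)%:R <= (15 ^ k)%:R.
Proof.
set r : R := 14723 / 10000.
have r7 : r ^+ 7 <= 15 by rewrite /r !exprS expr0; lra.
rewrite powR_mulrn; last by rewrite /r; lra.
rewrite exprS mulrA (_ : 10000 / 14723 * r = 1) ?mul1r; last by rewrite /r; field.
by rewrite exprM natrX lerXn2r // ?nnegrE ?exprn_ge0 //; rewrite /r; lra.
Qed.

Theorem mainTheorem14 :
  (forall N : nat, exists n : nat, (N <= n)%N /\
     exists e : rel 'I_n,
       [/\ simple_graph e, connected_graph e, degenerate 3 e, bipartite e
         & planar e] /\
       (15 : Rdefinitions.R) `^ ((n%:R - 1) / 7) <= (num_minimal_cds e)%:R)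
  /\
  (exists c : Rdefinitions.R, 0 < c /\
     forall N : nat, exists n : nat, (N <= n)%N /\
       exists e : rel 'I_n,
         [/\ simple_graph e, degenerate 3 e, bipartite e & planar e] /\
         c * (14723 / 10000) `^ n%:R <= (num_minimal_cds e)%:R).
Proof.
have count N : (15 ^ N.+2)%:R <= (num_minimal_cds (@glued N.+2))%:R :> R.
  by rewrite ler_nat glued_num_minimal_cds.
split=> [N|].
  exists (7 * N.+2).+1; split; first lia.
  exists (@glued N.+2); split; first exact: glued_properties.
  by rewrite powR_glued_order count.
exists (10000 / 14723); split=> [|N]; first lra.
exists (7 * N.+2).+1; split; first lia.
have [? ? ? ? ?] := glued_properties N.+2.
exists (@glued N.+2); split; first by [].
exact: le_trans (growth_rate_le N.+2) (count N).
Qed.
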